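(* Let $P_c$ and $P_d$ be the programs defined in the context, built with the same ordering $\alpha$ of $X$, and let $A'\subseteq A^+$. Then $P_d$ has a supported model $M$ with $A'=\{\vec a\in A^+: a\in M\}$ if and only if $P_c$ has a supported model $N$ with $A'=\{\vec a\in A^+: a\in N\}$.
   Context: Delete-relaxed planning. Let $X$ be a finite set of atomic propositions, $A^+$ a finite set of actions, and $G\subseteq X$. Each action $\vec a\in A^+$ has $pre(\vec a),add(\vec a)\subseteq X$; there are no delete effects and the initial state is $\emptyset$. For each action $\vec a$ there is an action atom $a$. Further atoms are: - $\mathrm{dep}(p,q)$ for $p,q\in X$; - $\mathrm{ws}(a,p)$ for actions $\vec a$ and $p\in X$; - a special atom $f$. All these atoms are pairwise distinct and distinct from $X$. Logic programs. A normal rule has the form $h\leftarrow b_1,\dots,b_n,\mathtt{not}\,c_1,\dots,\mathtt{not}\,c_m$, and a choice rule has the form $\{h\}\leftarrow(\text{same body})$; the body may be empty. An interpretation $I$ satisfies a body if all $b_i\in I$ and no $c_j\in I$. $I$ is a model if every normal rule whose body $I$ satisfies has its head in $I$. The supporting rules w.r.t. $I$ are: - the normal rules whose body $I$ satisfies; - the choice rules whose body $I$ satisfies and whose head is in $I$. A model $I$ is supported if $I$ equals the set of heads of its supporting rules. Vertex elimination. For a digraph $(V',E')$ and vertex $v$: - the fill-in is $F(v)=\{(x,y):(x,v),(v,y)\in E',x\ne y\}$; - the $v$-elimination graph deletes $v$ together with its incident arcs and adds $F(v)$. For an ordering $\alpha:\{1,\dots,n\}\to V$ of a digraph $\mathcal{G}$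 with $n$ vertices, set $\mathcal{G}_0=\mathcal{G}$ and let $\mathcal{G}_i$ be the $\alpha(i)$-elimination graph of $\mathcal{G}_{i-1}$ for $i=1,\dots,n-1$. Let $F_{i-1}(\alpha(i))$ be the fill-in of $\alpha(i)$ in $\mathcal{G}_{i-1}$. The vertex elimination graph $\mathcal{G}^*_\alpha=(V,E^* )$ has as arcs the original arcs together with all $F_{i-1}(\alpha(i))$. Let $E=\{(p,q)\in X\times X:\exists \vec a\in A^+,\ p\in add(\vec a),\ q\in pre(\vec a)\}$ and $\mathcal{G}=(X,E)$. Let $n=|X|$, fix an ordering $\alpha$ of $X$, and let $E^*$ be the arc set of $\mathcal{G}^*_\alpha$. Define the rule groups: - (C5) $\mathrm{dep}(p,q)\leftarrow\mathrm{dep}(p,\alpha(i)),\mathrm{dep}(\alpha(i),q)$ for each $i\in\{1,\dots,n-1\}$ and each $(p,q)\in F_{i-1}(\alpha(i))$; - (C6) $f\leftarrow \mathrm{dep}(p,q),\mathrm{dep}(q,p),\mathtt{not}\,f$ for all $p,q\in X$ (possibly $p=q$) with $(p,q),(q,p)\in E^*$. Program $P_c$ (causal) consists of (C5), (C6), and: - (C1) $\{\mathrm{dep}(p,q)\}\leftarrow q$ for each $(p,q)\in E$; - (C2) $\{\mathrm{ws}(a,p)\}\leftarrow \mathrm{dep}(p,q_1),\dots,\mathrm{dep}(p,q_k)$ for each $\vec a\in A^+$ and $p\in add(\vec a)$, where $pre(\vec a)=\{q_1,\dots,q_k\}$; - (C3) $p\leftarrow \mathrm{ws}(a,p)$ and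 $a\leftarrow\mathrm{ws}(a,p)$ for each $\vec a\in A^+$ and $p\in add(\vec a)$; - (C4) $g\leftarrow\mathtt{not}\,g$ for each $g\in G$. Program $P_d$ (diagnostic) consists of (C5), (C6), and: - (D1) $\{p\}\leftarrow$ (empty body) for each $p\in X$; - (D2) $\{\mathrm{ws}(a,p)\}\leftarrow p$ for each $\vec a\in A^+$ and $p\in add(\vec a)$; - (D3) $f\leftarrow p,\mathtt{not}\,\mathrm{ws}(a_1,p),\dots,\mathtt{not}\,\mathrm{ws}(a_m,p),\mathtt{not}\,f$ for each $p\in X$, where $\vec a_1,\dots,\vec a_m$ are all actions $\vec a$ with $p\in add(\vec a)$; - (D4) $\mathrm{dep}(p,q)\leftarrow\mathrm{ws}(a,p)$ for each $\vec a\in A^+$, $p\in add(\vec a)$ and $q\in pre(\vec a)$; - (D5) $q\leftarrow\mathrm{dep}(p,q)$ for each $(p,q)\in E$; - (D6) $a\leftarrow\mathrm{ws}(a,p)$ for each $\vec a\in A^+$ and $p\in add(\vec a)$; - (D7) $g\leftarrow\mathtt{not}\,g$ for each $g\in G$. *)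

From mathcomp Require Import all_boot.
From Stdlib Require List.
Set Implicit Arguments.
Unset Strict Implicit.
Unset Printing Implicit Defensive.

(* A rule: [rchoice = false] is a normal rule  h <- pos, not neg;
           [rchoice = true]  is a choice rule {h} <- pos, not neg. *)
Record rule (atom : Type) := Rule {
  rchoice : bool;
  rhead : atom;
  rpos : list atom;
  rneg : list atom }.

Definition normal {atom : Type} (h : atom) (pos neg : list atom) :=
  Rule false h pos neg.
Definition choice {atom : Type} (h : atom) (pos neg : list atom) :=
  Rule true h pos neg.

Definition program (atom : Type) := rule atom -> Prop.
Definition interp (atom : Type) := atom -> Prop.

Definition body_sat {atom : Type} (I : interp atom) (r : rule atom) : Prop :=
  List.Forall I (rpos r) /\ List.Forall (fun c => ~ I c) (rneg r).

Definition is_model {atom : Type} (P : program atom) (I : interp atom) : Prop :=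
  forall r, P r -> rchoice r = false -> body_sat I r -> I (rhead r).

Definition supporting {atom : Type} (P : program atom) (I : interp atom)
    (r : rule atom) : Prop :=
  P r /\ body_sat I r /\ (rchoice r = false \/ I (rhead r)).

Definition supported_model {atom : Type} (P : program atom) (I : interp atom)
  : Prop :=
  is_model P I /\
  forall x, I x <-> exists r, supporting P I r /\ rhead r = x.

(* X = propositions, A = actions (A^+). Constructors are pairwise distinct. *)
Inductive atom (X A : Type) :=
  | AX of X
  | AA of A
  | Dep of X & X
  | Ws of A & X
  | Ff.
Arguments Ff {X A}.
Arguments AX {X A}.
Arguments AA {X A}.
Arguments Dep {X A}.
Arguments Ws {X A}.

Section Encodings.
Variables (X A : finType) (pre add : A -> {set X}) (G : {set X}).

Definition Earcs : {set X * X} :=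
  [set pq | [exists a, (pq.1 \in add a) && (pq.2 \in pre a)]].

Definition fillin (E' : {set X * X}) (v : X) : {set X * X} :=
  [set xy | [&& (xy.1, v) \in E', (v, xy.2) \in E' & xy.1 != xy.2]].

(* arcs of the v-elimination graph: delete arcs incident to v, add F(v).
   (Vertex sets need not be tracked: all arcs are between remaining vertices.) *)
Definition elim_arcs (E' : {set X * X}) (v : X) : {set X * X} :=
  [set xy in E' | (xy.1 != v) && (xy.2 != v)] :|: fillin E' v.

(* For an ordering s = [alpha(1); ...; alpha(n)], the list of pairs
   (alpha(i), arcs of G_{i-1}) for i = 1..n. *)
Fixpoint elim_steps (E' : {set X * X}) (s : seq X) : seq (X * {set X * X}) :=
  match s with
  | [::] => [::]
  | v :: s' => (v, E') :: elim_steps (elim_arcs E' v) s'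
  end.

Variable alpha : seq X.

(* steps i = 1..n-1 : pairs (alpha(i), arcs of G_{i-1}) *)
Definition steps : seq (X * {set X * X}) :=
  take (size alpha).-1 (elim_steps Earcs alpha).

Definition Estar : {set X * X} :=
  [set xy | (xy \in Earcs) || has (fun st => xy \in fillin st.2 st.1) steps].

Notation atm := (atom X A).

Definition C5 (r : rule atm) : Prop :=
  exists st, exists p q, List.In st steps /\ (p, q) \in fillin st.2 st.1 /\
    r = normal (Dep p q) [:: Dep p st.1; Dep st.1 q] [::].

Definition C6 (r : rule atm) : Prop :=
  exists p q, (p, q) \in Estar /\ (q, p) \in Estar /\
    r = normal Ff [:: Dep p q; Dep q p] [:: Ff].

Definition Pc : program atm := fun r =>
  (exists p q, (p, q) \in Earcs /\ r = choice (Dep p q) [:: AX q] [::]) \/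
  (exists a p, p \in add a /\
     r = choice (Ws a p) [seq Dep p q | q <- enum (pre a)] [::]) \/
  (exists a p, p \in add a /\
     (r = normal (AX p) [:: Ws a p] [::] \/ r = normal (AA a) [:: Ws a p] [::])) \/
  (exists g, g \in G /\ r = normal (AX g) [::] [:: AX g]) \/
  C5 r \/ C6 r.

Definition Pd : program atm := fun r =>
  (exists p, r = choice (AX p) [::] [::]) \/
  (exists a p, p \in add a /\ r = choice (Ws a p) [:: AX p] [::]) \/
  (exists p, r = normal Ff [:: AX p]
       ([seq Ws a p | a <- enum [pred a | p \in add a]] ++ [:: Ff])) \/
  (exists a p q, p \in add a /\ q \in pre a /\ r = normal (Dep p q) [:: Ws a p] [::]) \/
  (exists p q, (p, q) \in Earcs /\ r = normal (AX q) [:: Dep p q] [::]) \/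
  (exists a p, p \in add a /\ r = normal (AA a) [:: Ws a p] [::]) \/
  (exists g, g \in G /\ r = normal (AX g) [::] [:: AX g]) \/
  C5 r \/ C6 r.

End Encodings.

(* From P_d to P_c the same interpretation works: every true atom of a
   supported model of P_d keeps a justification in P_c, a dep atom justified
   by (D4) being justified by (C1) since (D5) makes its target true.

   From P_c to P_d we keep a supported model N of P_c except that dep atoms
   are restricted to those derivable by (D4) and (C5).  The only nontrivial
   rule is then (D5): a true dep(p,q) must have a true target q.  In N every
   dep(p,q) is justified by (C1), giving q, or by (C5) through a vertex v,
   giving dep(v,q) again, and the constraints (C6) forbid 2-cycles.  The core
   of the file shows that this descent terminates: calling a dep arc live when
   it is still an arc of the elimination graph at the moment its first
   endpoint is eliminated, live arcs form no cycle (shortcut a cycle at its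
   earliest eliminated vertex by a fill-in arc), and every dep arc is a path
   of live arcs (induction on the elimination order). *)

From mathcomp Require Import all_boot zify.
From Stdlib Require Import Classical.
From Stdlib Require ClassicalEpsilon.
Set Implicit Arguments.
Unset Strict Implicit.
Unset Printing Implicit Defensive.

Lemma In_mem (T : eqType) (x : T) (s : seq T) : List.In x s <-> x \in s.
Proof.
elim: s => [|y s IH] //=; rewrite in_cons; split.
- by case=> [->|/IH ->]; rewrite ?eqxx ?orbT.
- by case/orP=> [/eqP ->|/IH]; [left|right].
Qed.

Lemma size_elim_steps (X : finType) (E : {set X * X}) s :
  size (elim_steps E s) = size s.
Proof. by elim: s E => [|v s IH] E //=; rewrite IH. Qed.

Lemma nth_elim_steps (X : finType) (E : {set X * X}) s i x0 e0 :
  i < size s ->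
  nth (x0, e0) (elim_steps E s) i = (nth x0 s i, foldl (@elim_arcs X) E (take i s)).
Proof. by elim: s E i => [|v s IH] E [|i] //= Hi; rewrite IH. Qed.

Section EliminationGraphs.
Variables (X A : finType) (pre add : A -> {set X}) (alpha : seq X).
Hypothesis alpha_uniq : uniq alpha.
Hypothesis alpha_all : forall x, x \in alpha.

Local Notation n := (size alpha).

Definition stage i := foldl (@elim_arcs X) (Earcs pre add) (take i alpha).

(* Position of a vertex in the ordering (0-based: alpha(pos v + 1) = v). *)
Definition pos (x : X) := index x alpha.

Lemma pos_lt x : pos x < n.
Proof. by rewrite /pos index_mem. Qed.

Lemma pos_inj : injective pos.
Proof.
move=> x y Hxy.
by rewrite -(nth_index x (alpha_all x)) -(nth_index x (alpha_all y)) -!/(pos _) Hxy.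
Qed.

Lemma pos_neq x y : x != y -> pos x != pos y.
Proof. exact/contra_neq/pos_inj. Qed.

Lemma stage0 : stage 0 = Earcs pre add.
Proof. by rewrite /stage take0. Qed.

Lemma stage_succ i x0 : i < n -> stage i.+1 = elim_arcs (stage i) (nth x0 alpha i).
Proof. by move=> Hi; rewrite /stage (take_nth x0 Hi) foldl_rcons. Qed.

Lemma In_steps st : List.In st (steps pre add alpha) <->
  pos st.1 < n.-1 /\ st.2 = stage (pos st.1).
Proof.
have Hsize : size (steps pre add alpha) = n.-1.
  by rewrite /steps size_takel // size_elim_steps leq_pred.
case: st => v E /=; rewrite In_mem; split.
- case/(nthP (v, E)) => i; rewrite Hsize => Hi.
  have Hi' : i < n by apply: leq_trans Hi (leq_pred _).
  rewrite /steps nth_take // nth_elim_steps // => -[<- <-].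
  by rewrite /pos index_uniq.
- move=> [Hv ->]; apply/(nthP (v, E)); exists (pos v); first by rewrite Hsize.
  by rewrite /steps nth_take // nth_elim_steps ?pos_lt // /pos nth_index.
Qed.

Lemma stage_persist i j x y : i <= j -> j <= n -> (x, y) \in stage i ->
  (forall k, i <= k < j -> k != pos x /\ k != pos y) -> (x, y) \in stage j.
Proof.
elim: j => [|j IH] Hij Hj Hxy Hk; first by move: Hij; rewrite leqn0 => /eqP <-.
case: (ltngtP i j.+1) Hij => // [Hlt _|<- _ //].
have {}IH : (x, y) \in stage j.
  by apply: IH => // [|k /andP [Hik Hkj]]; [exact: ltnW | apply: Hk; rewrite Hik ltnW].
have [Hx Hy] : j != pos x /\ j != pos y by apply: Hk; rewrite ltnSn andbT.
rewrite (stage_succ x Hj) /elim_arcs !inE IH /=.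
have Hjx : x != nth x alpha j by apply: contra_neq Hx => ->; rewrite /pos index_uniq.
have Hjy : y != nth x alpha j by apply: contra_neq Hy => ->; rewrite /pos index_uniq.
by rewrite Hjx Hjy.
Qed.

Lemma fillin_stage v x y : (x, y) \in fillin (stage (pos v)) v -> (x, y) \in stage (pos v).+1.
Proof.
by move=> H; rewrite (stage_succ v (pos_lt v)) /pos nth_index // /elim_arcs inE H orbT.
Qed.

End EliminationGraphs.

Section LiveArcs.
Variables (X A : finType) (pre add : A -> {set X}) (alpha : seq X).
Hypothesis alpha_uniq : uniq alpha.
Hypothesis alpha_all : forall x, x \in alpha.

Local Notation n := (size alpha).
Local Notation pos := (pos alpha).
Local Notation stage := (stage pre add alpha).

(* An abstract dependency relation with the three properties that the dep
   atoms of a supported model of P_c enjoy: closure under (C5), absence of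
   2-cycles (C6), and justification of every arc by (C1) or (C5). *)
Variables (dep : X -> X -> Prop) (target : X -> Prop).
Hypothesis dep_fill : forall v p q, pos v < n.-1 ->
  (p, q) \in fillin (stage (pos v)) v -> dep p v -> dep v q -> dep p q.
Hypothesis dep_asym : forall p q, dep p q -> dep q p -> False.
Hypothesis dep_just : forall p q, dep p q ->
  ((p, q) \in Earcs pre add /\ target q) \/
  exists v, [/\ pos v < n.-1, (p, q) \in fillin (stage (pos v)) v, dep p v & dep v q].

Lemma dep_irr p : ~ dep p p.
Proof. by move=> H; exact: (dep_asym H H). Qed.

Lemma dep_neq x y : dep x y -> x != y.
Proof. by move=> H; apply: contraPneq H => ->; apply: dep_irr. Qed.

Lemma dep_pos_neq x y : dep x y -> pos x != pos y.
Proof. by move/dep_neq; exact: (pos_neq alpha_all). Qed.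

Definition live x y := dep x y /\ (x, y) \in stage (minn (pos x) (pos y)).

Definition liveb x y : bool :=
  if ClassicalEpsilon.excluded_middle_informative (live x y) then true else false.

Lemma liveP x y : reflect (live x y) (liveb x y).
Proof. by rewrite /liveb; case: ClassicalEpsilon.excluded_middle_informative; constructor. Qed.

(* Two live arcs u -> m -> w through a vertex m eliminated before u and w
   can be shortcut: (u, w) is a fill-in arc at m, hence a live arc. *)
Lemma live_shortcut u m w : live u m -> live m w ->
  pos m < pos u -> pos m < pos w -> u != w -> live u w.
Proof.
move=> [Dum Eum] [Dmw Emw] Hmu Hmw Huw.
have Hm : pos m < n.-1.
  by rewrite (leq_trans Hmu) // -ltnS prednK ?pos_lt // (leq_ltn_trans _ (pos_lt alpha_all u)).
move: Eum Emw; rewrite (minn_idPr (ltnW Hmu)) (minn_idPl (ltnW Hmw)) => Eum Emw.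
have Hf : (u, w) \in fillin (stage (pos m)) m by rewrite inE /= Eum Emw Huw.
split; first exact: (dep_fill Hm Hf Dum Dmw).
apply: (stage_persist alpha_uniq (i := (pos m).+1)).
- by rewrite leq_min Hmu Hmw.
- by rewrite geq_min ltnW ?(pos_lt alpha_all).
- exact: fillin_stage.
- move=> k /andP [_]; rewrite leq_min => /andP [Hku Hkw].
  by rewrite !neq_ltn Hku Hkw.
Qed.

(* Live arcs form no cycle: shortcutting at the earliest eliminated vertex
   of a cycle yields a shorter cycle, and cycles of length 1 or 2 are
   excluded by the absence of 2-cycles in dep. *)
Lemma live_acyclic c : cycle liveb c -> c = [::].
Proof.
have [N] := ubnP (size c); elim: N c => // N IH [//|x0 c0] Hsize Hc.
set c := x0 :: c0 in Hsize Hc *.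
have [m mc mmin] := arg_minnP pos (mem_head x0 c0 : x0 \in c).
have [i s Hrot] := rot_to mc.
have Hc' : cycle liveb (m :: s) by rewrite -Hrot rot_cycle.
have Hsz : size (m :: s) = size c by rewrite -Hrot size_rot.
have Hmem z : z \in m :: s -> z \in c by rewrite -Hrot mem_rot.
exfalso; clear Hrot.
have Hmin y : y \in c -> m != y -> pos m < pos y.
  by move=> yc Hmy; rewrite ltn_neqAle mmin // andbT (pos_neq alpha_all).
case: s Hc' Hsz Hmem => [|z t] Hc' Hsz Hmem.
  by move: Hc' => /= /andP [/liveP [Hmm _] _]; exact: (dep_irr Hmm).
move: Hc'; rewrite /= rcons_path => /andP [/liveP Lmz /andP [Hpt /liveP Lrm]].
set r := last z t in Lrm.
have [Hzr|Hzr] := eqVneq z r; first by rewrite -Hzr in Lrm; exact: (dep_asym Lmz.1 Lrm.1).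
have Lrz : live r z.
  apply: (live_shortcut Lrm Lmz); rewrite 1?eq_sym //; apply: Hmin.
  - by apply: Hmem; rewrite inE mem_last orbT.
  - by rewrite eq_sym (dep_neq Lrm.1).
  - by apply: Hmem; rewrite !inE eqxx orbT.
  - exact: (dep_neq Lmz.1).
suff : z :: t = [::] by [].
apply: IH; first by rewrite -ltnS (leq_trans _ Hsize) // -Hsz.
by rewrite /= rcons_path Hpt; apply/liveP.
Qed.

Definition live_path x y := [exists z, liveb x z && connect liveb z y].

Lemma live_path_arc x y : live x y -> live_path x y.
Proof. by move=> H; apply/existsP; exists y; rewrite connect0 andbT; apply/liveP. Qed.

Lemma live_path_trans x y z : live_path x y -> live_path y z -> live_path x z.
Proof.
move=> /existsP [a /andP [Hxa Cay]] /existsP [b /andP [Hyb Cbz]].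
apply/existsP; exists a; rewrite Hxa /=.
exact: (connect_trans Cay (connect_trans (connect1 Hyb) Cbz)).
Qed.

Lemma live_path_irr x : ~ live_path x x.
Proof.
move=> /existsP [z /andP [Hxz /connectP [p Hp Hx]]].
have : cycle liveb (z :: p) by rewrite /= rcons_path Hp -Hx Hxz.
by move/live_acyclic.
Qed.

(* Along a live path, the sets of live successors strictly shrink and
   the sets of live predecessors strictly grow; these are the measures of
   the well-founded inductions below. *)
Definition successors x := [set z | live_path x z].
Definition predecessors x := [set z | live_path z x].

Lemma successors_lt x v : live_path x v -> #|successors v| < #|successors x|.
Proof.
move=> Hxv; apply/proper_card/properP; split.
- by apply/subsetP => z; rewrite !inE; apply: live_path_trans.
- by exists v; rewrite !inE //; apply/negP/live_path_irr.
Qed.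

Lemma predecessors_lt x v : live_path v x -> #|predecessors v| < #|predecessors x|.
Proof.
move=> Hvx; apply/proper_card/properP; split.
- by apply/subsetP => z; rewrite !inE => Hzv; exact: (live_path_trans Hzv Hvx).
- by exists v; rewrite !inE //; apply/negP/live_path_irr.
Qed.

(* An arc of the original graph stays until one of its ends is eliminated. *)
Lemma live_base p q : (p, q) \in Earcs pre add -> dep p q -> live p q.
Proof.
move=> E D; split => //; apply: (stage_persist alpha_uniq (i := 0)).
- by [].
- by rewrite geq_min ltnW ?(pos_lt alpha_all).
- by rewrite stage0.
- by move=> k /andP [_]; rewrite leq_min => /andP [H1 H2]; rewrite !neq_ltn H1 H2.
Qed.

Lemma live_path_low p q v :
  (p, q) \in fillin (stage (pos v)) v -> dep p v -> dep v q ->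
  pos v < pos p -> pos v < pos q -> live_path p q.
Proof.
rewrite inE /= => /and3P [E1 E2 _] D1 D2 H1 H2.
apply: (@live_path_trans _ v); apply: live_path_arc; split => //.
- by rewrite (minn_idPr (ltnW H1)).
- by rewrite (minn_idPl (ltnW H2)).
Qed.

(* Every dep arc is a live path, by induction on the level
   minn (pos a) (pos b) of the arc, from the last eliminated vertices down.
   At a fixed level l, an arc is justified either by an original arc, or
   through a vertex v: if v is eliminated before both ends the arc is a
   composite of two live arcs, otherwise one half lies above level l and the
   other half is handled by a secondary induction along live paths. *)
Section AtLevel.
Variable l : nat.
Hypothesis dep_above : forall x y, l < minn (pos x) (pos y) -> dep x y -> live_path x y.

Lemma live_path_desc a b : pos b = l -> pos b < pos a -> dep a b -> live_path a b.
Proof.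
move=> Hb; have [N] := ubnP #|successors a|.
elim: N a => // N IHN a Hsucc Hba Dab.
case: (dep_just Dab) => [[E _]|[v [_ Hf Dav Dvb]]]; first exact/live_path_arc/live_base.
case: (ltngtP (pos v) (pos b)) => [Hvb|Hbv|Heq].
- by apply: (live_path_low Hf Dav Dvb) => //; apply: ltn_trans Hvb Hba.
- have Hav : live_path a v by apply: dep_above Dav; rewrite -Hb leq_min Hba Hbv.
  apply: (live_path_trans Hav (IHN v _ Hbv Dvb)).
  exact: leq_trans (successors_lt Hav) Hsucc.
- by move: (dep_pos_neq Dvb); rewrite Heq eqxx.
Qed.

Lemma live_path_asc a b : pos a = l -> pos a < pos b -> dep a b -> live_path a b.
Proof.
move=> Ha; have [N] := ubnP #|predecessors b|.
elim: N b => // N IHN b Hpred Hab Dab.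
case: (dep_just Dab) => [[E _]|[v [_ Hf Dav Dvb]]]; first exact/live_path_arc/live_base.
case: (ltngtP (pos v) (pos a)) => [Hva|Hav|Heq].
- by apply: (live_path_low Hf Dav Dvb) => //; apply: ltn_trans Hva Hab.
- have Hvb : live_path v b by apply: dep_above Dvb; rewrite -Ha leq_min Hav Hab.
  apply: (live_path_trans (IHN v _ Hav Dav) Hvb).
  exact: leq_trans (predecessors_lt Hvb) Hpred.
- by move: (dep_pos_neq Dav); rewrite Heq eqxx.
Qed.

End AtLevel.

Lemma dep_live_path a b : dep a b -> live_path a b.
Proof.
have [N] := ubnP (n - minn (pos a) (pos b)).
elim: N a b => // N IHN a b Hlev Dab.
have dep_above x y : minn (pos a) (pos b) < minn (pos x) (pos y) -> dep x y -> live_path x y.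
  by move=> Hxy; apply: IHN; have := pos_lt alpha_all x; lia.
case: (ltngtP (pos a) (pos b)) => [Hab|Hba|Heq].
- by apply: (live_path_asc dep_above) => //; rewrite (minn_idPl (ltnW Hab)).
- by apply: (live_path_desc dep_above) => //; rewrite (minn_idPr (ltnW Hba)).
- by move: (dep_pos_neq Dab); rewrite Heq eqxx.
Qed.

(* Consequently justifications cannot loop: every dep arc reaches, after
   finitely many (C5) decompositions, an arc justified by (C1). *)
Lemma dep_target p q : dep p q -> target q.
Proof.
have [N] := ubnP #|successors p|; elim: N p => // N IHN p Hsucc Dpq.
case: (dep_just Dpq) => [[_ Tq] //|[v [_ _ Dpv Dvq]]].
exact: (IHN v (leq_trans (successors_lt (dep_live_path Dpv)) Hsucc) Dvq).
Qed.

End LiveArcs.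

Lemma Forall_cat (T : Type) (P : T -> Prop) (s1 s2 : seq T) :
  List.Forall P (s1 ++ s2) <-> List.Forall P s1 /\ List.Forall P s2.
Proof.
elim: s1 => [|x s1 IH] /=; first by rewrite List.Forall_nil_iff; tauto.
by rewrite !List.Forall_cons_iff IH; tauto.
Qed.

Lemma Forall_map (T : eqType) (U : Type) (f : T -> U) (P : U -> Prop) (s : seq T) :
  List.Forall P (map f s) <-> (forall x, x \in s -> P (f x)).
Proof.
elim: s => [|y s IH] /=; first by rewrite List.Forall_nil_iff.
rewrite List.Forall_cons_iff IH; split => [[Hy Hs] x|H].
- by rewrite in_cons => /orP [/eqP ->|/Hs].
- by split => [|x xs]; apply: H; rewrite in_cons ?eqxx ?xs ?orbT.
Qed.

Section SupportedModels.
Variables (atom : Type) (P : program atom) (I : interp atom).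

Lemma supported_head x : supported_model P I -> I x ->
  exists r, [/\ P r, rhead r = x & body_sat I r].
Proof. by move=> [_ HI] /HI [r [[Pr [Hb _]] Hx]]; exists r. Qed.

(* Conversely, a model is supported as soon as each of its atoms heads a rule
   with true body: such rules are supporting, and the heads of supporting
   rules are true (normal rules fire, choice rules require their head). *)
Lemma supported_modelI : is_model P I ->
  (forall x, I x -> exists r, [/\ P r, rhead r = x & body_sat I r]) ->
  supported_model P I.
Proof.
move=> HM Hsupp; split => // x; split.
- move=> Ix; have [r [Pr Hx Hb]] := Hsupp x Ix.
  by exists r; split => //; split => //; split => //; right; rewrite Hx.
- by move=> [r [[Pr [Hb [Hn|Hh]]] <-]] //; apply: HM.
Qed.

End SupportedModels.

Ltac Forall_simpl := rewrite ?List.Forall_cons_iff ?List.Forall_nil_iff.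

Ltac Pd_cases Pr :=
  case: Pr => [[p' ->]|[[a' [p' [Hp ->]]]|[[p' ->]|[[a' [p' [q' [Hp [Hq ->]]]]]|
    [[p' [q' [He ->]]]|[[a' [p' [Hp ->]]]|[[g [Hg ->]]|
    [[st [p' [q' [Hst [Hf ->]]]]]|[p' [q' [Hs1 [Hs2 ->]]]]]]]]]]]].

Ltac Pc_cases Pr :=
  case: Pr => [[p' [q' [He ->]]]|[[a' [p' [Hp ->]]]|[[a' [p' [Hp [->| ->]]]]|
    [[g [Hg ->]]|[[st [p' [q' [Hst [Hf ->]]]]]|[p' [q' [Hs1 [Hs2 ->]]]]]]]]].

Section Encodings.
Variables (X A : finType) (pre add : A -> {set X}) (G : {set X}) (alpha : seq X).
Hypothesis alpha_uniq : uniq alpha.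
Hypothesis alpha_all : forall x, x \in alpha.

Local Notation atm := (atom X A).
Local Notation PC := (Pc pre add G alpha).
Local Notation PD := (Pd pre add G alpha).
Local Notation STEPS := (steps pre add alpha).

Lemma Earcs_Estar p q : (p, q) \in Earcs pre add -> (p, q) \in Estar pre add alpha.
Proof. by move=> H; rewrite inE H. Qed.

Lemma fillin_Estar st p q : List.In st STEPS -> (p, q) \in fillin st.2 st.1 ->
  (p, q) \in Estar pre add alpha.
Proof. by move=> /In_mem Hst Hf; rewrite inE; apply/orP; right; apply/hasP; exists st. Qed.

Lemma add_pre_Earcs a p q : p \in add a -> q \in pre a -> (p, q) \in Earcs pre add.
Proof. by move=> Hp Hq; rewrite inE; apply/existsP; exists a; rewrite Hp Hq. Qed.

(* Apart from the (C3) rules p <- ws(a,p), every normal rule of P_c is a rule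
   of P_d: (C3) a <- ws(a,p) is (D6), (C4) is (D7), and (C5), (C6) are shared. *)
Lemma Pc_normal_Pd r : PC r -> rchoice r = false ->
  PD r \/ exists a p, p \in add a /\ r = normal (AX p) [:: Ws a p] [::].
Proof.
move=> Pr; Pc_cases Pr => //= _.
- by right; exists a', p'.
- by left; do 5 right; left; exists a', p'.
- by left; do 6 right; left; exists g.
- by left; do 7 right; left; exists st, p', q'.
- by left; do 8 right; exists p', q'.
Qed.

Section DiagnosticModel.
Variable M : interp atm.
Hypothesis HM : supported_model PD M.

Lemma Pd_rule r : PD r -> rchoice r = false -> body_sat M r -> M (rhead r).
Proof. exact: HM.1. Qed.

Lemma Pd_noF : ~ M Ff.
Proof.
move=> Mf; have [r [Pr Hr [_ Hn]]] := supported_head HM Mf.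
move: Hr Hn; Pd_cases Pr => //= _; Forall_simpl; last by case.
by rewrite Forall_cat List.Forall_cons_iff => -[_ []].
Qed.

Lemma Pd_AX p : M (AX p) -> exists a, p \in add a /\ M (Ws a p).
Proof.
move=> Mp; apply: NNPP => Hnone; apply: Pd_noF.
pose r : rule atm :=
  normal Ff [:: AX p] ([seq Ws a p | a <- enum [pred a | p \in add a]] ++ [:: Ff]).
apply: (Pd_rule (r := r)) => //; first by right; right; left; exists p.
split; first by Forall_simpl.
apply/Forall_cat; split; last by Forall_simpl; split => //; exact: Pd_noF.
by apply/Forall_map => a; rewrite mem_enum inE => Ha Mw; apply: Hnone; exists a.
Qed.

Lemma Pd_Ws a p : M (Ws a p) -> p \in add a /\ M (AX p).
Proof.
move=> Mw; have [r [Pr Hr [Bp _]]] := supported_head HM Mw.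
by move: Hr Bp; Pd_cases Pr => //= -[<- <-]; Forall_simpl => -[].
Qed.

Lemma Pd_AA a : M (AA a) <-> exists p, p \in add a /\ M (Ws a p).
Proof.
split=> [Ma|[p [Hp Mw]]].
- have [r [Pr Hr [Bp _]]] := supported_head HM Ma.
  by move: Hr Bp; Pd_cases Pr => //= -[<-]; Forall_simpl => -[Mw _]; exists p'.
- apply: (Pd_rule (r := normal (AA a) [:: Ws a p] [::])) => //.
  + by do 5 right; left; exists a, p.
  + by split; Forall_simpl.
Qed.

Lemma Pd_Dep p q : M (Dep p q) ->
  (exists a, [/\ p \in add a, q \in pre a & M (Ws a p)]) \/
  (exists st, [/\ List.In st STEPS, (p, q) \in fillin st.2 st.1,
                  M (Dep p st.1) & M (Dep st.1 q)]).
Proof.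
move=> Md; have [r [Pr Hr [Bp _]]] := supported_head HM Md.
move: Hr Bp; Pd_cases Pr => //= -[<- <-]; Forall_simpl.
- by move=> [Mw _]; left; exists a'.
- by move=> [M1 [M2 _]]; right; exists st.
Qed.

Lemma Pd_to_Pc : supported_model PC M.
Proof.
apply: supported_modelI => [r Pr Hch Hb|x Mx].
  case: (Pc_normal_Pd Pr Hch) => [PDr|[a [p [Hp Er]]]]; first exact: Pd_rule.
  by move: Hb; rewrite Er => -[/List.Forall_cons_iff [/Pd_Ws []]].
case: x Mx => [p|a|p q|a p|] Mx; last by case: (Pd_noF Mx).
- have [a [Hp Mw]] := Pd_AX Mx.
  exists (normal (AX p) [:: Ws a p] [::]); split => //; last by split; Forall_simpl.
  by right; right; left; exists a, p; split => //; left.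
- have [p [Hp Mw]] := (Pd_AA a).1 Mx.
  exists (normal (AA a) [:: Ws a p] [::]); split => //; last by split; Forall_simpl.
  by right; right; left; exists a, p; split => //; right.
- case: (Pd_Dep Mx) => [[a [Hp Hq Mw]]|[st [Hst Hf M1 M2]]].
  + have He := add_pre_Earcs Hp Hq.
    have Mq : M (AX q).
      apply: (Pd_rule (r := normal (AX q) [:: Dep p q] [::])) => //.
      * by do 4 right; left; exists p, q.
      * by split; Forall_simpl.
    exists (choice (Dep p q) [:: AX q] [::]); split => //; last by split; Forall_simpl.
    by left; exists p, q.
  + exists (normal (Dep p q) [:: Dep p st.1; Dep st.1 q] [::]); split => //.
      by do 4 right; left; exists st, p, q.
    by split; Forall_simpl.
- have [Hp _] := Pd_Ws Mx.
  exists (choice (Ws a p) [seq Dep p q | q <- enum (pre a)] [::]); split => //.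
    by right; left; exists a, p.
  split; last by Forall_simpl.
  apply/Forall_map => q; rewrite mem_enum => Hq.
  apply: (Pd_rule (r := normal (Dep p q) [:: Ws a p] [::])) => //.
  + by do 3 right; left; exists a, p, q.
  + by split; Forall_simpl.
Qed.

End DiagnosticModel.

Section CausalModel.
Variable N : interp atm.
Hypothesis HN : supported_model PC N.

Lemma Pc_rule r : PC r -> rchoice r = false -> body_sat N r -> N (rhead r).
Proof. exact: HN.1. Qed.

Lemma Pc_noF : ~ N Ff.
Proof.
move=> Nf; have [r [Pr Hr [_ Hn]]] := supported_head HN Nf.
by move: Hr Hn; Pc_cases Pr => //= _; Forall_simpl => -[].
Qed.

Lemma Pc_AX p : N (AX p) -> exists a, p \in add a /\ N (Ws a p).
Proof.
move=> Np; have [r [Pr Hr [Bp Bn]]] := supported_head HN Np.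
move: Hr Bp Bn; Pc_cases Pr => //= -[Ep]; subst; Forall_simpl.
- by move=> [Nw _]; exists a'.
- by move=> _ [].
Qed.

Lemma Pc_Ws a p : N (Ws a p) ->
  p \in add a /\ (forall q, q \in pre a -> N (Dep p q)).
Proof.
move=> Nw; have [r [Pr Hr [Bp _]]] := supported_head HN Nw.
move: Hr Bp; Pc_cases Pr => //= -[<- <-] /Forall_map Hdep; split => // q Hq.
by apply: Hdep; rewrite mem_enum.
Qed.

Lemma Pc_Ws_AX a p : N (Ws a p) -> N (AX p).
Proof.
move=> Nw; have [Hp _] := Pc_Ws Nw.
apply: (Pc_rule (r := normal (AX p) [:: Ws a p] [::])) => //.
- by right; right; left; exists a, p; split => //; left.
- by split; Forall_simpl.
Qed.

Lemma Pc_AA a : N (AA a) <-> exists p, p \in add a /\ N (Ws a p).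
Proof.
split=> [Na|[p [Hp Nw]]].
- have [r [Pr Hr [Bp _]]] := supported_head HN Na.
  by move: Hr Bp; Pc_cases Pr => //= -[<-]; Forall_simpl => -[Nw _]; exists p'.
- apply: (Pc_rule (r := normal (AA a) [:: Ws a p] [::])) => //.
  + by right; right; left; exists a, p; split => //; right.
  + by split; Forall_simpl.
Qed.

Lemma Pc_Dep p q : N (Dep p q) ->
  ((p, q) \in Earcs pre add /\ N (AX q)) \/
  (exists st, [/\ List.In st STEPS, (p, q) \in fillin st.2 st.1,
                  N (Dep p st.1) & N (Dep st.1 q)]).
Proof.
move=> Nd; have [r [Pr Hr [Bp _]]] := supported_head HN Nd.
move: Hr Bp; Pc_cases Pr => //= -[<- <-]; Forall_simpl.
- by move=> [Nq _]; left.
- by move=> [N1 [N2 _]]; right; exists st.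
Qed.

Lemma Pc_fill st p q : List.In st STEPS -> (p, q) \in fillin st.2 st.1 ->
  N (Dep p st.1) -> N (Dep st.1 q) -> N (Dep p q).
Proof.
move=> Hst Hf N1 N2.
apply: (Pc_rule (r := normal (Dep p q) [:: Dep p st.1; Dep st.1 q] [::])) => //.
- by do 4 right; left; exists st, p, q.
- by split; Forall_simpl.
Qed.

(* The C6 constraints apply to every true dep atom, whose arc lies in E^*. *)
Lemma Pc_asym p q : N (Dep p q) -> N (Dep q p) -> False.
Proof.
have Estar_dep x y : N (Dep x y) -> (x, y) \in Estar pre add alpha.
  case/Pc_Dep => [[He _]|[st [Hst Hf _ _]]]; first exact: Earcs_Estar.
  exact: (fillin_Estar Hst Hf).
move=> N1 N2; apply: Pc_noF.
apply: (Pc_rule (r := normal Ff [:: Dep p q; Dep q p] [:: Ff])) => //.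
- by do 5 right; exists p, q; split; [exact: Estar_dep | split; [exact: Estar_dep|]].
- by split; Forall_simpl; split => //; exact: Pc_noF.
Qed.

Lemma Pc_dep_target p q : N (Dep p q) -> N (AX q).
Proof.
apply: (dep_target (pre := pre) (add := add) alpha_uniq alpha_all
  (dep := fun p q => N (Dep p q)) (target := fun q => N (AX q))).
- move=> v p' q' Hv Hf N1 N2.
  apply: (Pc_fill (st := (v, stage pre add alpha (pos alpha v)))) => //.
  exact/(In_steps pre add alpha_uniq alpha_all).
- exact: Pc_asym.
- move=> p' q' /Pc_Dep [[He Nq]|[[v E] [Hst Hf N1 N2]]]; first by left.
  move/(In_steps pre add alpha_uniq alpha_all): Hst => /= [Hv HE].
  by right; exists v; rewrite -HE.
Qed.

Lemma Pc_goal g : g \in G -> N (AX g).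
Proof.
move=> Hg; apply: NNPP => Ng; apply: (Ng).
apply: (Pc_rule (r := normal (AX g) [::] [:: AX g])) => //.
- by do 3 right; left; exists g.
- by split; Forall_simpl.
Qed.

(* The dep atoms of the P_d model built from N: the least relation closed
   under (D4) and (C5). *)
Inductive derived : X -> X -> Prop :=
  | derived_ws a p q : p \in add a -> q \in pre a -> N (Ws a p) -> derived p q
  | derived_fill st p q : List.In st STEPS -> (p, q) \in fillin st.2 st.1 ->
      derived p st.1 -> derived st.1 q -> derived p q.

Lemma derived_dep p q : derived p q -> N (Dep p q).
Proof.
elim=> [a p' q' Hp Hq Nw|st p' q' Hst Hf _ N1 _ N2].
- exact: (Pc_Ws Nw).2.
- exact: (Pc_fill Hst Hf N1 N2).
Qed.

Definition diagnostic_of : interp atm := fun x =>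
  match x with
  | Dep p q => derived p q
  | Ff => False
  | _ => N x
  end.

(* It is a model of P_d; the only delicate rule is (D5), which is
   Pc_dep_target. *)
Lemma diagnostic_of_model : is_model PD diagnostic_of.
Proof.
move=> r Pr Hch [Bp Bn]; move: Hch Bp Bn; Pd_cases Pr => //= _; Forall_simpl.
- move=> [/Pc_AX [a [Hp Nw]] _] /Forall_cat [/Forall_map Hnone _].
  by apply: (Hnone a); rewrite ?mem_enum.
- by move=> [Nw _] _; apply: (derived_ws Hp Hq Nw).
- by move=> [/derived_dep /Pc_dep_target].
- by move=> [Nw _] _; apply/Pc_AA; exists p'.
- by move=> _ _; apply: Pc_goal.
- by move=> [D1 [D2 _]] _; apply: (derived_fill Hst Hf D1 D2).
- by move=> [/derived_dep D1 [/derived_dep D2 _]] _; apply: (Pc_asym D1 D2).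
Qed.

Lemma Pc_to_Pd : supported_model PD diagnostic_of.
Proof.
apply: supported_modelI => [|x Mx]; first exact: diagnostic_of_model.
case: x Mx => [p|a|p q|a p|] //= Mx.
- by exists (choice (AX p) [::] [::]); split => //; left; exists p.
- have [p [Hp Nw]] := (Pc_AA a).1 Mx.
  exists (normal (AA a) [:: Ws a p] [::]); split => //; last by split; Forall_simpl.
  by do 5 right; left; exists a, p.
- case: Mx => [a p' q' Hp Hq Nw|st p' q' Hst Hf D1 D2].
  + exists (normal (Dep p' q') [:: Ws a p'] [::]); split => //; last by split; Forall_simpl.
    by do 3 right; left; exists a, p', q'.
  + exists (normal (Dep p' q') [:: Dep p' st.1; Dep st.1 q'] [::]); split => //.
      by do 7 right; left; exists st, p', q'.
    by split; Forall_simpl.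
- have [Hp _] := Pc_Ws Mx.
  exists (choice (Ws a p) [:: AX p] [::]); split => //.
    by right; left; exists a, p.
  by split; Forall_simpl; split => //; exact: (Pc_Ws_AX Mx).
Qed.

End CausalModel.
End Encodings.

Theorem theorem3 (X A : finType) (pre add : A -> {set X}) (G : {set X})
    (alpha : seq X) (Halpha_uniq : uniq alpha) (Halpha_all : forall x, x \in alpha)
    (A' : {set A}) :
  (exists M : interp (atom X A),
      supported_model (Pd pre add G alpha) M /\ (forall a, a \in A' <-> M (AA a)))
  <->
  (exists N : interp (atom X A),
      supported_model (Pc pre add G alpha) N /\ (forall a, a \in A' <-> N (AA a))).
Proof.
split=> [[M [HM HA]]|[N [HN HA]]].
- by exists M; split => //; exact: Pd_to_Pc.
- exists (diagnostic_of pre add alpha N); split => //.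
  exact: (Pc_to_Pd Halpha_uniq Halpha_all HN).
Qed.
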